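(* Let $X$ be a special (abstract) rank one group with abelian unipotent subgroups $A$ and $B$, and set $H = N_X(A) \cap N_X(B)$. Then for all $1 \neq a_1, a_2 \in A$ with $a_1 a_2 \neq 1$ we have $a_1 \in a_2 [A,H]$.
   Context: For a group $X$ and $g,x \in X$, write $x^g = g^{-1}xg$, $A^g = g^{-1}Ag$, and $[x,g] = x^{-1}g^{-1}xg$; $[A,H]$ denotes the subgroup generated by all $[a,h]$ with $a \in A$, $h \in H$. A group $X$ is an (abstract) rank one group with abelian unipotent subgroups $A$ and $B$ if $X = \langle A, B\rangle$ where $A$ and $B$ are different abelian subgroups of $X$ such that for each $1 \neq a \in A$ there is an element $1 \neq b \in B$ with $A^b = B^a$, and for each $1 \neq b \in B$ there is an element $1 \neq a \in A$ with $B^a = A^b$. In such a group, for each $1 \neq a \in A$ the element $1 \neq b \in B$ with $A^b = B^a$ is uniquely determined and is denoted $b(a)$. The group $X$ is called special if $b(a^{-1}) = b(a)^{-1}$ for all $1 \neq a \in A$. *)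

Record Group := {
  gcar :> Type;
  gmul : gcar -> gcar -> gcar;
  ginv : gcar -> gcar;
  gone : gcar;
  gmulA : forall x y z, gmul x (gmul y z) = gmul (gmul x y) z;
  gmul1l : forall x, gmul gone x = x;
  gmulVl : forall x, gmul (ginv x) x = gone
}.

Arguments gmul {g}.
Arguments ginv {g}.
Arguments gone {g}.

Section Defs.
Variable X : Group.

Definition subset := X -> Prop.

Definition seteq (S T : subset) : Prop := forall x, S x <-> T x.

Definition is_subgroup (S : subset) : Prop :=
  S gone /\ (forall x y, S x -> S y -> S (gmul x y)) /\ (forall x, S x -> S (ginv x)).

Definition is_abelian_subgroup (S : subset) : Prop :=
  is_subgroup S /\ forall x y, S x -> S y -> gmul x y = gmul y x.

Definition conj (x g : X) : X := gmul (ginv g) (gmul x g).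

Definition conjset (S : subset) (g : X) : subset :=
  fun y => exists a, S a /\ y = conj a g.

Definition comm (x g : X) : X := gmul (ginv x) (gmul (ginv g) (gmul x g)).

Inductive gen (S : subset) : subset :=
  | gen_mem : forall x, S x -> gen S x
  | gen_one : gen S gone
  | gen_mul : forall x y, gen S x -> gen S y -> gen S (gmul x y)
  | gen_inv : forall x, gen S x -> gen S (ginv x).

Definition commset (S T : subset) : subset :=
  gen (fun z => exists a h, S a /\ T h /\ z = comm a h).

Definition normalizer (S : subset) : subset := fun g => seteq (conjset S g) S.

Definition rank_one (A B : subset) : Prop :=
  is_abelian_subgroup A /\ is_abelian_subgroup B /\
  ~ seteq A B /\
  (forall x : X, gen (fun y => A y \/ B y) x) /\
  (forall a, A a -> a <> gone ->
     exists b, B b /\ b <> gone /\ seteq (conjset A b) (conjset B a)) /\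
  (forall b, B b -> b <> gone ->
     exists a, A a /\ a <> gone /\ seteq (conjset B a) (conjset A b)).

(* "b = b(a)": b is the (unique) element 1 <> b in B with A^b = B^a *)
Definition is_b (A B : subset) (a b : X) : Prop :=
  B b /\ b <> gone /\ seteq (conjset A b) (conjset B a).

Definition special (A B : subset) : Prop :=
  forall a b, A a -> a <> gone -> is_b A B a b -> is_b A B (ginv a) (ginv b).

End Defs.

From Stdlib Require Import FunctionalExtensionality PropExtensionality Classical.

(* Let X = <A, B> be a special rank one group, H = N_X(A) ∩ N_X(B), and let
   1 <> a1, a2 in A with a3 := a1 a2 <> 1.  Write b_i := b(a_i); by speciality
   A^(b_i) = B^(a_i) and A^(b_i^-1) = B^(a_i^-1) ("opposite pairs").

   For an opposite pair (a, b) both a b^-1 a and b^-1 a b^-1 interchange A and B,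
   so h_i := (b3^-1 a3 b3^-1)(a_i b_i^-1 a_i) lies in H.  A direct computation
   gives B^(a3^(h_i) a_i^-1) = A^(b_j^-1 b_i^-1) for {i, j} = {1, 2}; as B is
   abelian the two right-hand sides agree, so s := a3^(h_1) a1^-1 and
   a3^(h_2) a2^-1 differ by an element of A normalising B, which is trivial in
   a rank one group.  Hence [a3, h_2]^-1 [a3, h_1] = a2^-1 a1 lies in [A, H]. *)

Declare Scope grp_scope.
Local Open Scope grp_scope.
Local Notation "x * y" := (gmul x y) : grp_scope.
Local Notation "x ^-1" := (ginv x) (at level 3, left associativity, format "x ^-1") : grp_scope.
Local Notation "1" := gone : grp_scope.
Local Notation "S :^ g" := (conjset _ S g) (at level 35) : grp_scope.

Section GroupLaws.
Variable X : Group.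
Implicit Types x y z u : X.

Lemma mulgV x : x * x^-1 = 1.
Proof.
  rewrite <- (gmul1l X (x * x^-1)), <- (gmulVl X (x^-1)) at 1.
  rewrite <- gmulA, (gmulA X (x^-1)), gmulVl, gmul1l.
  apply gmulVl.
Qed.

Lemma mulg1 x : x * 1 = x.
Proof. rewrite <- (gmulVl X x), gmulA, mulgV, gmul1l. reflexivity. Qed.

Lemma inv_uniq x y : x * y = 1 -> x^-1 = y.
Proof.
  intro Hxy. rewrite <- (mulg1 (x^-1)), <- Hxy, gmulA, gmulVl, gmul1l.
  reflexivity.
Qed.

Lemma invgK x : x^-1^-1 = x.
Proof. apply inv_uniq, gmulVl. Qed.

Lemma invgM x y : (x * y)^-1 = y^-1 * x^-1.
Proof.
  apply inv_uniq. rewrite gmulA, <- (gmulA X x), mulgV, mulg1, mulgV.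
  reflexivity.
Qed.

Lemma invg1 : (1 : X)^-1 = 1.
Proof. apply inv_uniq, gmul1l. Qed.

Lemma mulgK x y : x * y * y^-1 = x.
Proof. rewrite <- gmulA, mulgV, mulg1. reflexivity. Qed.

Lemma mulgVK x y : x * y^-1 * y = x.
Proof. rewrite <- gmulA, gmulVl, mulg1. reflexivity. Qed.

Lemma eq_of_mulV x y : x * y^-1 = 1 -> x = y.
Proof.
  intro Hxy. rewrite <- (mulgVK x y), Hxy, gmul1l. reflexivity.
Qed.

(* If x1 = s y1 and x2 = s y2 for a common s, then y1 = y2 (u^-1 x2)^-1 (u^-1 x1);
   applied with u = a3 and x_i = a3^(h_i) this writes a1 = a2 [a3,h2]^-1 [a3,h1]. *)
Lemma coset_quotient x1 x2 y1 y2 u :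
  x1 * y1^-1 = x2 * y2^-1 -> y2 * ((u^-1 * x2)^-1 * (u^-1 * x1)) = y1.
Proof.
  intro Hs.
  rewrite invgM, invgK, !gmulA, mulgK.
  rewrite <- (mulgVK x1 y1), Hs, !gmulA, mulgVK, mulgV, gmul1l.
  reflexivity.
Qed.

Lemma conjM x g h : conj X x (g * h) = conj X (conj X x g) h.
Proof. unfold conj. rewrite invgM, !gmulA. reflexivity. Qed.

Lemma conj1 x : conj X x 1 = x.
Proof. unfold conj. rewrite invg1, gmul1l, mulg1. reflexivity. Qed.

Lemma conjVK x g : conj X (conj X x g^-1) g = x.
Proof. rewrite <- conjM, gmulVl, conj1. reflexivity. Qed.

Lemma subset_ext (S T : subset X) : seteq X S T -> S = T.
Proof.
  intro HST. apply functional_extensionality; intro x.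
  apply propositional_extensionality, HST.
Qed.

Lemma conjsetM (S : subset X) g h : S :^ g :^ h = S :^ (g * h).
Proof.
  apply subset_ext; intro y; split.
  - intros [z [[a [Ha ->]] ->]]. exists a. rewrite conjM. auto.
  - intros [a [Ha ->]]. exists (conj X a g). split.
    + exists a; auto.
    + apply conjM.
Qed.

Lemma conjset1 (S : subset X) : S :^ 1 = S.
Proof.
  apply subset_ext; intro y; split.
  - intros [a [Ha ->]]. rewrite conj1. exact Ha.
  - intro Hy. exists y. rewrite conj1. auto.
Qed.

Lemma mem_conjset (S : subset X) g x : S x -> (S :^ g) (conj X x g).
Proof. intro Hx. exists x. auto. Qed.

Lemma conjset_transport (S T : subset X) g : S :^ g = T -> T :^ g^-1 = S.
Proof. intros <-. rewrite conjsetM, mulgV, conjset1. reflexivity. Qed.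

Lemma subgroup_mul (S : subset X) x y : is_subgroup X S -> S x -> S y -> S (x * y).
Proof. intros [_ [HM _]]; auto. Qed.

Lemma subgroup_inv (S : subset X) x : is_subgroup X S -> S x -> S (x^-1).
Proof. intros [_ [_ HI]]; auto. Qed.

Lemma conjset_id (S : subset X) g : is_subgroup X S -> S g -> S :^ g = S.
Proof.
  intros [_ [SM SI]] Sg. apply subset_ext; intro y; split.
  - intros [a [Ha ->]]. unfold conj. auto.
  - intro Hy. exists (conj X y (g^-1)). split.
    + unfold conj. rewrite invgK. auto.
    + rewrite conjVK. reflexivity.
Qed.

Lemma comm_conj x g : comm X x g = x^-1 * conj X x g.
Proof. reflexivity. Qed.

End GroupLaws.

Section RankOne.
Variables (X : Group) (A B : subset X).
Hypotheses (subA : is_subgroup X A) (subB : is_subgroup X B).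

Definition swaps (g : X) : Prop := A :^ g = B /\ B :^ g = A.

Definition opposite (a b : X) : Prop :=
  A a /\ B b /\ A :^ b = B :^ a /\ A :^ b^-1 = B :^ a^-1.

Lemma swaps_aba a b : opposite a b -> swaps (a * b^-1 * a).
Proof.
  intros [Ha [Hb [E E']]]. split.
  - rewrite <- !conjsetM, (conjset_id X A a subA Ha), E', conjsetM, gmulVl, conjset1.
    reflexivity.
  - rewrite <- !conjsetM, <- E, (conjsetM X A b), mulgV, conjset1.
    apply conjset_id; auto.
Qed.

Lemma swaps_bab a b : opposite a b -> swaps (b^-1 * a * b^-1).
Proof.
  intros [Ha [Hb [E E']]].
  pose proof (conjset_id X B (b^-1) subB (subgroup_inv X B b subB Hb)) as Bb.
  split.
  - rewrite <- !conjsetM, E', (conjsetM X B (a^-1)), gmulVl, conjset1. exact Bb.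
  - rewrite <- !conjsetM, Bb, <- E, conjsetM, mulgV, conjset1. reflexivity.
Qed.

Lemma swaps_mul g h : swaps g -> swaps h -> A :^ (g * h) = A /\ B :^ (g * h) = B.
Proof.
  intros [Ag Bg] [Ah Bh]. rewrite <- !conjsetM, Ag, Bg, Ah, Bh. auto.
Qed.

Definition twist (a3 b3 a b : X) : X := (b3^-1 * a3 * b3^-1) * (a * b^-1 * a).

Lemma twist_normalizes a3 b3 a b :
  opposite a3 b3 -> opposite a b ->
  A :^ twist a3 b3 a b = A /\ B :^ twist a3 b3 a b = B.
Proof. intros O3 O. apply swaps_mul; [apply swaps_bab | apply swaps_aba]; auto. Qed.

(* The element a3^(h_i) a_i^-1 of A; it is shown below not to depend on i. *)
Definition shift (a3 b3 a b : X) : X := conj X a3 (twist a3 b3 a b) * a^-1.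

Lemma twist_conj a3 b3 ai bi aj bj :
  opposite a3 b3 -> opposite ai bi -> A :^ bj^-1 = B :^ aj^-1 ->
  a3^-1 * ai = aj^-1 ->
  B :^ shift a3 b3 ai bi = A :^ (bj^-1 * bi^-1).
Proof.
  intros O3 Oi Ej rel. unfold shift.
  pose proof O3 as [Ha3 [_ [E3 E3']]].
  set (h := twist a3 b3 ai bi).
  assert (Bh : B :^ h^-1 = B)
    by (apply conjset_transport, twist_normalizes; auto).
  assert (Eh : b3 * h * ai^-1 = a3 * b3^-1 * ai * bi^-1).
  { unfold h, twist. rewrite !gmulA, mulgV, gmul1l, mulgK. reflexivity. }
  unfold conj.
  rewrite <- !conjsetM, Bh, Ej, <- E3, <- rel, <- (conjsetM X B (a3^-1)), <- E3'.
  rewrite !conjsetM, !gmulA, Eh, <- !gmulA, <- (conjsetM X A a3).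
  rewrite (conjset_id X A a3 subA Ha3). reflexivity.
Qed.

Lemma unipotent_normalizing_trivial :
  ~ seteq X A B ->
  (forall a, A a -> a <> 1 -> exists b, B b /\ b <> 1 /\ seteq X (A :^ b) (B :^ a)) ->
  forall z, A z -> B :^ z = B -> z = 1.
Proof.
  intros neqAB exb z Az Bz. apply NNPP; intro nz.
  destruct (exb z Az nz) as [b [Hb [_ Eb]]].
  apply subset_ext in Eb. rewrite Bz in Eb.
  apply neqAB. intro x.
  rewrite <- (conjset_transport X A B b Eb), (conjset_id X B (b^-1) subB).
  - tauto.
  - apply subgroup_inv; auto.
Qed.

Lemma special_opposite :
  special X A B ->
  (forall a, A a -> a <> 1 -> exists b, B b /\ b <> 1 /\ seteq X (A :^ b) (B :^ a)) ->
  forall a, A a -> a <> 1 -> exists b, opposite a b.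
Proof.
  intros SP exb a Ha na. destruct (exb a Ha na) as [b [Hb [nb Eb]]].
  destruct (SP a b Ha na (Logic.conj Hb (Logic.conj nb Eb))) as [_ [_ Eb']].
  exists b. repeat split; auto; apply subset_ext; auto.
Qed.

Lemma twist_shift_eq a1 a2 b1 b2 b3 :
  (forall x y, A x -> A y -> x * y = y * x) ->
  (forall x y, B x -> B y -> x * y = y * x) ->
  (forall z, A z -> B :^ z = B -> z = 1) ->
  opposite (a1 * a2) b3 -> opposite a1 b1 -> opposite a2 b2 ->
  shift (a1 * a2) b3 a1 b1 = shift (a1 * a2) b3 a2 b2.
Proof.
  intros cA cB trivAB O3 O1 O2.
  pose proof O1 as [Ha1 [Hb1 [_ E1']]].
  pose proof O2 as [Ha2 [Hb2 [_ E2']]].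
  pose proof O3 as [Ha3 _].
  assert (inA : forall a b, opposite a b -> A (shift (a1 * a2) b3 a b)).
  { intros a b O. pose proof O as [Ha _].
    apply (subgroup_mul X A _ _ subA); [|apply (subgroup_inv X A _ subA); auto].
    rewrite <- (proj1 (twist_normalizes _ _ _ _ O3 O)). apply mem_conjset; auto. }
  assert (B1 : B :^ shift (a1 * a2) b3 a1 b1 = A :^ (b2^-1 * b1^-1)).
  { apply (twist_conj _ _ _ _ a2); auto.
    rewrite invgM, <- gmulA, gmulVl, mulg1. reflexivity. }
  assert (B2 : B :^ shift (a1 * a2) b3 a2 b2 = A :^ (b1^-1 * b2^-1)).
  { apply (twist_conj _ _ _ _ a1); auto.
    rewrite (cA a1 a2), invgM, <- gmulA, gmulVl, mulg1; auto. }
  rewrite (cB (b1^-1) (b2^-1)) in B2; [|apply (subgroup_inv X B _ subB); auto ..].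
  apply eq_of_mulV, trivAB.
  - apply (subgroup_mul X A _ _ subA); [|apply (subgroup_inv X A _ subA)]; auto.
  - rewrite <- conjsetM, B1, <- B2, conjsetM, mulgV, conjset1. reflexivity.
Qed.

End RankOne.

Theorem lemma2p2 (X : Group) (A B : subset X) :
  rank_one X A B -> special X A B ->
  let H : subset X := fun g => normalizer X A g /\ normalizer X B g in
  forall a1 a2 : X, A a1 -> A a2 -> a1 <> gone -> a2 <> gone ->
    gmul a1 a2 <> gone ->
    exists c, commset X A H c /\ a1 = gmul a2 c.
Proof.
  intros RO SP H a1 a2 Ha1 Ha2 n1 n2 n3.
  destruct RO as [[SA cA] [[SB cB] [neqAB [_ [exb _]]]]].
  set (a3 := a1 * a2) in *.
  assert (Ha3 : A a3) by (apply (subgroup_mul X A _ _ SA); auto).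
  destruct (special_opposite X A B SP exb a1 Ha1 n1) as [b1 O1].
  destruct (special_opposite X A B SP exb a2 Ha2 n2) as [b2 O2].
  destruct (special_opposite X A B SP exb a3 Ha3 n3) as [b3 O3].
  set (h1 := twist X a3 b3 a1 b1).
  set (h2 := twist X a3 b3 a2 b2).
  assert (inH : forall a b, opposite X A B a b -> H (twist X a3 b3 a b)).
  { intros a b O. destruct (twist_normalizes X A B SA SB _ _ _ _ O3 O) as [NA NB].
    split; intro y; [rewrite NA | rewrite NB]; tauto. }
  assert (inAH : forall h, H h -> commset X A H (comm X a3 h))
    by (intros h Hh; apply gen_mem; exists a3, h; auto).
  exists ((comm X a3 h2)^-1 * comm X a3 h1). split.
  - apply gen_mul; [apply gen_inv|]; apply inAH, inH; auto.
  - symmetry. rewrite !comm_conj. apply coset_quotient.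
    apply (twist_shift_eq X A B SA SB); auto.
    apply (unipotent_normalizing_trivial X A B SB neqAB exb).
Qed.
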